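(* Let $M$ be a proper metric space and $X_1,\dots,X_n$ a coarsely transverse collection of half spaces in $M$. For $\sigma\in S_n$ put $A_0^\sigma=X_{\sigma_1}\cdots X_{\sigma_n}$ and $A_i^\sigma=X_{\sigma_i}^cX_{\sigma_{i+1}}\cdots X_{\sigma_n}$ ($i=1,\dots,n$), and $A_i=A_i^{\mathrm{id}}$. Then for every $\sigma\in S_n$, $$[A_0^\sigma\wedge\dots\wedge A_n^\sigma]=\mathrm{sgn}(\sigma)\,[A_0\wedge\dots\wedge A_n]\in HX^n(M).$$
   Context: Borel sets are identified with their indicator functions. For $Y\subseteq M$, $Y_R=\{x:d(x,Y)\le R\}$. Borel sets $X_1,\dots,X_n$ form a coarsely transverse collection of half spaces if $\bigcap_i (X_i)_R\cap(X_i^c)_R$ is bounded for all $R\ge0$. Coarse cohomology: equip $M^{n+1}$ with the max metric, $\Delta_R$ the $R$-thickening of the multi-diagonal. $CX^n(M)$ consists of locally bounded Borel functions $\theta:M^{n+1}\to\mathbb{C}$ with $\mathrm{supp}(\theta)\cap\Delta_R$ bounded for all $R>0$, with differential $\delta\theta=\sum_{i=0}^{n+1}(-1)^i\pi_i^*\theta$ ($\pi_i$ omits the $i$-th coordinate); $HX^n(M)$ is its cohomology. For bounded Borel $f_j$, $f_0\wedge\dots\wedge f_n=\sum_{\tau\in S_{n+1}}\mathrm{sgn}(\tau)f_{\tau_0}\otimes\dots\otimes f_{\tau_n}$. Each $A^\sigma_0\wedge\dots\wedge A^\sigma_n$ is a coarse cocycle. *)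

From HB Require Import structures.
From mathcomp Require Import all_boot all_order all_algebra all_fingroup.
From mathcomp Require Import all_classical all_reals.
From mathcomp Require Import measure.
From mathcomp Require Import complex.
Set Implicit Arguments. Unset Strict Implicit. Unset Printing Implicit Defensive.
Import Order.TTheory GRing.Theory Num.Theory.
Local Open Scope classical_set_scope.
Local Open Scope ring_scope.

Section CoarseDefs.
Variable R : realType.
Variable M : Type.

Definition is_metric (d : M -> M -> R) : Prop :=
  [/\ (forall x y, 0 <= d x y),
      (forall x y, d x y = 0 <-> x = y),
      (forall x y, d x y = d y x) &
      (forall x y z, d x z <= d x y + d y z)].

Definition oball (d : M -> M -> R) (x : M) (r : R) : set M := [set y | d x y < r].
Definition cball (d : M -> M -> R) (x : M) (r : R) : set M := [set y | d x y <= r].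

Definition mopen (d : M -> M -> R) (U : set M) : Prop :=
  forall x, U x -> exists2 r : R, 0 < r & oball d x r `<=` U.

Definition mborel (d : M -> M -> R) (A : set M) : Prop :=
  smallest (sigma_algebra setT) (mopen d) A.

Definition mcompact (d : M -> M -> R) (K : set M) : Prop :=
  forall (I : Type) (U : I -> set M), (forall i, mopen d (U i)) ->
    K `<=` \bigcup_i U i ->
    exists2 F : set I, finite_set F & K `<=` \bigcup_(i in F) U i.

Definition proper_metric (d : M -> M -> R) : Prop :=
  is_metric d /\ forall x r, mcompact d (cball d x r).

Definition mbounded (d : M -> M -> R) (A : set M) : Prop :=
  exists r : R, forall x y, A x -> A y -> d x y <= r.

(** Y_r = {x : d(x,Y) <= r}, where d(x,Y) = inf_{y in Y} d(x,y). *)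
Definition thick (d : M -> M -> R) (Y : set M) (r : R) : set M :=
  [set x | forall e : R, 0 < e -> exists2 y, Y y & d x y < r + e].

End CoarseDefs.

Definition dmax (R : realType) (M : Type) (k : nat) (d : M -> M -> R)
  (x y : 'I_k -> M) : R := \big[Num.max/0]_(i < k) d (x i) (y i).

Definition diag (M : Type) (k : nat) : set ('I_k -> M) :=
  [set x | exists m : M, forall i, x i = m].

Definition Delta (R : realType) (M : Type) (k : nat) (d : M -> M -> R) (r : R)
  : set ('I_k -> M) := thick (dmax d) (@diag M k) r.

Definition dC (R : realType) (z w : R[i]) : R :=
  let: Complex a b := (z - w)%R in Num.sqrt (a ^+ 2 + b ^+ 2).

Definition borel_fun (R : realType) (T : Type) (dT : T -> T -> R) (f : T -> R[i]) : Prop :=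
  forall U : set R[i], mopen (@dC R) U -> mborel dT (f @^-1` U).

Definition locally_bounded (R : realType) (T : Type) (dT : T -> T -> R) (f : T -> R[i]) : Prop :=
  forall x, exists2 r : R, 0 < r & exists C : R, forall y, oball dT x r y -> dC (f y) 0 <= C.

Definition fsupp (R : realType) (T : Type) (f : T -> R[i]) : set T := [set x | f x != 0].

Definition CX (R : realType) (M : Type) (d : M -> M -> R) (k : nat)
  (theta : ('I_k.+1 -> M) -> R[i]) : Prop :=
  [/\ borel_fun (dmax d) theta,
      locally_bounded (dmax d) theta &
      forall r : R, 0 < r -> mbounded (dmax d) (fsupp theta `&` Delta d r)].

Definition proj_omit (M : Type) (k : nat) (i : 'I_k.+2) (x : 'I_k.+2 -> M) : 'I_k.+1 -> M :=
  fun j => x (lift i j).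

Definition cobound (R : realType) (M : Type) (k : nat) (theta : ('I_k.+1 -> M) -> R[i])
  (x : 'I_k.+2 -> M) : R[i] :=
  \sum_(i < k.+2) (-1) ^+ i * theta (proj_omit i x).

(** f is a coboundary in degree k: f = delta eta for some eta in CX^{k-1}
    (in degree 0, since CX^{-1} = 0, this means f = 0). *)
Definition is_coboundary (R : realType) (M : Type) (d : M -> M -> R) (k : nat) :
  (('I_k.+1 -> M) -> R[i]) -> Prop :=
  match k as k0 return ((('I_k0.+1 -> M) -> R[i]) -> Prop) with
  | 0 => fun f => f = (fun _ => 0)
  | k'.+1 => fun f => exists2 eta, CX d eta & f = cobound eta
  end.

Definition indic (R : realType) (M : Type) (A : set M) (x : M) : R[i] :=
  if `[< A x >] then 1 else 0.
Arguments indic {R M} A x.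

Definition wedge (R : realType) (M : Type) (k : nat) (f : 'I_k.+1 -> M -> R[i])
  (x : 'I_k.+1 -> M) : R[i] :=
  \sum_(tau : 'S_k.+1) (-1) ^+ (odd_perm tau) * \prod_(j < k.+1) f (tau j) (x j).

Definition coarsely_transverse (R : realType) (M : Type) (d : M -> M -> R) (n : nat)
  (X : 'I_n -> set M) : Prop :=
  (forall i, mborel d (X i)) /\
  forall r : R, 0 <= r ->
    mbounded d (\bigcap_(i in setT) (thick d (X i) r `&` thick d (~` X i) r)).

(** A^sigma_0 = X_{s1} ... X_{sn};  A^sigma_i = X^c_{s_i} X_{s_{i+1}} ... X_{s_n}
    (0-based: index i+1 corresponds to the complement of X (sigma i)). *)
Definition Aset (M : Type) (n : nat) (X : 'I_n -> set M) (sigma : 'S_n) (i : 'I_n.+1) : set M :=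
  match unlift ord0 i with
  | None => \bigcap_(j in setT) X (sigma j)
  | Some k => ~` X (sigma k) `&` \bigcap_(j in [set j : 'I_n | (k < j)%N]) X (sigma j)
  end.

From HB Require Import structures.
From mathcomp Require Import all_boot all_order all_algebra all_fingroup.
From mathcomp Require Import all_classical all_reals.
From mathcomp Require Import measure.
From mathcomp Require Import complex.
From mathcomp Require Import ring.
Import Order.TTheory GRing.Theory Num.Theory.
Local Open Scope classical_set_scope.
Local Open Scope ring_scope.
Set Implicit Arguments. Unset Strict Implicit. Unset Printing Implicit Defensive.

(* Write each wedge of indicators as the determinant of [1_{A_i}(x_j)]. Since
   C_i := X_{σ_{i+1}} ⋯ X_{σ_n} is the disjoint union of A_0, ..., A_i, a
   unitriangular change of rows replaces 1_{A_i} by 1_{C_i}, and the last row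
   becomes the constant 1. Exchanging σ_k and σ_{k+1} changes only the row
   1_{C_k}, and 1_{C_k} + 1_{C'_k} = 1_{C_{k-1}} + 1_{C_{k+1}} - 1_D with
   D = X^c_{σ_k} X^c_{σ_{k+1}} C_{k+1}; as C_{k-1} and C_{k+1} are rows already,
   the two wedges add up to minus the determinant with row k replaced by 1_D.
   Subtracting the constant row from the rows beyond k and expanding along it
   exhibits this determinant as the coboundary of an (n-1)-cochain η. On tuples
   lying entirely inside, or entirely outside, one X_i, η has a zero row or two
   equal rows; by coarse transversality the other tuples near the diagonal form a
   bounded set, so η is a coarse cochain. Adjacent transpositions generate S_n. *)

Section Borel.
Variables (R : realType) (T : Type) (dT : T -> T -> R).

Lemma borelC A : mborel dT A -> mborel dT (~` A).
Proof. by rewrite -setTD; exact: sigma_algebraCD. Qed.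

Lemma borelU A B : mborel dT A -> mborel dT B -> mborel dT (A `|` B).
Proof.
move=> mA mB; rewrite -bigcup2E; apply: sigma_algebra_bigcup => -[|[|i]] //=.
exact: sigma_algebra0.
Qed.

Lemma borelI A B : mborel dT A -> mborel dT B -> mborel dT (A `&` B).
Proof.
by move=> mA mB; rewrite -[_ `&` _]setCK setCI; apply: borelC; apply: borelU; exact: borelC.
Qed.

Lemma borel_fin_bigcup (I : finType) (D : set I) (F : I -> set T) :
  (forall i, D i -> mborel dT (F i)) -> mborel dT (\bigcup_(i in D) F i).
Proof.
move=> mF; have -> : \bigcup_(i in D) F i =
    \big[setU/set0]_(i <- enum I | `[< D i >]) F i.
  rewrite -bigcup_seq_cond; congr (\bigcup_(i in _) _).
  by apply/seteqP; split => i /=; rewrite mem_enum asboolE.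
elim/big_ind: _ => //; first exact: sigma_algebra0.
  exact: borelU.
by move=> i /asboolP; exact: mF.
Qed.

Lemma borel_fin_bigcap (I : finType) (D : set I) (F : I -> set T) :
  (forall i, D i -> mborel dT (F i)) -> mborel dT (\bigcap_(i in D) F i).
Proof.
move=> mF; rewrite -[X in mborel _ X]setCK setC_bigcap; apply: borelC.
by apply: borel_fin_bigcup => i Di; exact: borelC (mF i Di).
Qed.

End Borel.

Lemma borel_preimage (R : realType) (T U : Type) (dT : T -> T -> R)
    (dU : U -> U -> R) (f : T -> U) :
  (forall V, mopen dU V -> mopen dT (f @^-1` V)) ->
  forall B, mborel dU B -> mborel dT (f @^-1` B).
Proof.
move=> fcont; apply: (@smallest_sub _ _ _ [set B | mborel dT (f @^-1` B)]).
- split => [|B mB|B mB] /=.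
  + by rewrite preimage_set0; exact: sigma_algebra0.
  + by rewrite setTD preimage_setC; exact: borelC.
  + by rewrite preimage_bigcup; exact: sigma_algebra_bigcup.
- by move=> V oV; apply: sub_sigma_algebra; exact: fcont.
Qed.

Section BorelSimple.
Variables (R : realType) (T : Type) (dT : T -> T -> R).
Local Notation C := R[i].

Definition borel_simple (f : T -> C) := exists (L : finType) (E : L -> set T)
  (F : (L -> bool) -> C),
  (forall l, mborel dT (E l)) /\ forall x, f x = F (fun l => `[< E l x >]).

Lemma borel_simple_borel_fun f : borel_simple f -> borel_fun dT f.
Proof.
move=> [L [E [F [mE /funext ->]]]] U _.
pose vec x : {ffun L -> bool} := [ffun l => `[< E l x >]].
pose cell (v : {ffun L -> bool}) := \bigcap_(l in setT) (if v l then E l else ~` E l).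
have cellP v x : cell v x <-> v = vec x.
  split => [xv|-> l _]; last by rewrite ffunE; case: asboolP.
  apply/ffunP => l; rewrite ffunE.
  by have := xv l I; case: (v l) => h; [rewrite asboolT | rewrite asboolF].
have vecE x : vec x = (fun l => `[< E l x >]) :> (L -> bool).
  by apply/funext => l; rewrite ffunE.
have -> : (fun x => F (fun l => `[< E l x >])) @^-1` U =
    \bigcup_(v in [set v : {ffun L -> bool} | U (F v)]) cell v.
  apply/seteqP; split => x /=.
    by move=> Ux; exists (vec x); [rewrite /= vecE | apply/cellP].
  by case=> v /= + /cellP vx; rewrite vx vecE.
apply: borel_fin_bigcup => v _; apply: borel_fin_bigcap => l _.
by case: (v l); [exact: mE | exact: borelC].
Qed.

Lemma borel_simple_locally_bounded f : borel_simple f -> locally_bounded dT f.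
Proof.
move=> [L [E [F [_ ef]]]] x; exists 1 => //.
exists (\sum_(v : {ffun L -> bool}) dC (F v) 0) => y _.
rewrite ef; have -> : F (fun l => `[< E l y >]) = F [ffun l => `[< E l y >]].
  by congr F; apply/funext => l; rewrite ffunE.
rewrite (bigD1 [ffun l => `[< E l y >]]) //= lerDl.
by apply: sumr_ge0 => v _; rewrite /dC; case: (F v - 0) => a b; exact: sqrtr_ge0.
Qed.

Lemma borel_simple0 : borel_simple (fun _ => 0).
Proof. by exists 'I_0, (fun _ => set0), (fun _ => 0); split => // -[]. Qed.

Lemma borel_simpleD f g :
  borel_simple f -> borel_simple g -> borel_simple (fun x => f x + g x).
Proof.
move=> [L [E [F [mE ef]]]] [L' [E' [F' [mE' eg]]]].
exists (L + L')%type, (fun l => match l with inl a => E a | inr b => E' b end).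
exists (fun v => F (fun a => v (inl a)) + F' (fun b => v (inr b))).
by split => [[]|x] //; rewrite ef eg.
Qed.

Lemma borel_simpleZ c f : borel_simple f -> borel_simple (fun x => c * f x).
Proof.
move=> [L [E [F [mE ef]]]]; exists L, E, (fun v => c * F v).
by split => // x; rewrite ef.
Qed.

End BorelSimple.

Section Transverse.
Variables (R : realType) (M : Type) (d : M -> M -> R).
Hypothesis hd : is_metric d.
Local Notation C := R[i].

Let d_ge0 x y : 0 <= d x y. Proof. by case: hd. Qed.
Let d_sym x y : d x y = d y x. Proof. by case: hd. Qed.
Let d_triangle x y z : d x z <= d x y + d y z. Proof. by case: hd. Qed.

Lemma dmax_ge k (x y : 'I_k -> M) j : d (x j) (y j) <= dmax d x y.
Proof. exact: (le_bigmax _ (fun i => d (x i) (y i)) j). Qed.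

Lemma dmax_le k (x y : 'I_k -> M) c :
  0 <= c -> (forall j, d (x j) (y j) <= c) -> dmax d x y <= c.
Proof. by move=> c0 xy; apply: bigmax_le. Qed.

Lemma borel_coord k (j : 'I_k) (B : set M) :
  mborel d B -> mborel (dmax d) [set x : 'I_k -> M | B (x j)].
Proof.
apply: (borel_preimage (f := fun x : 'I_k -> M => x j)) => U oU x Uxj.
have [r r0 rU] := oU _ Uxj; exists r => // y xy; apply: rU.
exact: le_lt_trans (dmax_ge x y j) xy.
Qed.

Variables (n : nat) (X : 'I_n -> set M).

Definition separated k (x : 'I_k -> M) :=
  exists i, (forall j, X i (x j)) \/ (forall j, ~ X i (x j)).

Lemma unseparated_Delta_bounded k (r : R) : 0 <= r -> coarsely_transverse d X ->
  mbounded (dmax d) ([set x : 'I_k -> M | ~ separated x] `&` Delta d r).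
Proof.
move=> r0 [_ htr].
pose S := \bigcap_(i in setT) (thick d (X i) (r + 1) `&` thick d (~` X i) (r + 1)).
have [K SK] : mbounded d S by apply: htr; rewrite addr_ge0.
have near x : ([set x | ~ separated x] `&` Delta d r) x ->
    exists2 m, S m & forall j, d (x j) m <= r + 1.
  move=> [/= nsep Dx]; have [y /= [m ym] xy] := Dx 1 ltr01.
  have xm j : d (x j) m <= r + 1.
    by rewrite -(ym j); apply/ltW/(le_lt_trans (dmax_ge x y j)).
  have near_side (A : set M) j : A (x j) -> thick d A (r + 1) m.
    move=> Axj e e0; exists (x j) => //; rewrite d_sym.
    by apply: le_lt_trans (xm j) _; rewrite ltrDl.
  exists m => // i _.
  have /not_orP[/existsNP[j nXj] /not_existsP[j' Xj']] :
      ~ ((forall j, X i (x j)) \/ (forall j, ~ X i (x j))).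
    by move=> sep; apply: nsep; exists i.
  by split; [exact: near_side Xj' | exact: near_side nXj].
exists (r + 1 + K + (r + 1)) => x y /near[m Sm xm] /near[m' Sm' ym'].
have K0 : 0 <= K := le_trans (d_ge0 m m) (SK _ _ Sm Sm).
apply: dmax_le => [|j]; first by rewrite !addr_ge0.
apply: (le_trans (d_triangle _ m _)); rewrite -addrA lerD //.
apply: (le_trans (d_triangle _ m' _)); rewrite lerD // ?SK //.
by rewrite d_sym.
Qed.

Definition admissible k (f : ('I_k -> M) -> C) :=
  borel_simple (dmax d) f /\ forall x, separated x -> f x = 0.

Lemma admissible_CX k (f : ('I_k.+1 -> M) -> C) :
  coarsely_transverse d X -> admissible f -> CX d f.
Proof.
move=> htr [fs fsep]; split.
- exact: borel_simple_borel_fun.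
- exact: borel_simple_locally_bounded.
move=> r r0; have [K bK] := unseparated_Delta_bounded k.+1 (ltW r0) htr.
exists K => x y [fx Dx] [fy Dy]; apply: bK; split => //.
  by move=> /fsep fx0; move: fx; rewrite /fsupp /= fx0 eqxx.
by move=> /fsep fy0; move: fy; rewrite /fsupp /= fy0 eqxx.
Qed.

Lemma admissible0 k : admissible (fun _ : 'I_k -> M => 0).
Proof. by split => //; exact: borel_simple0. Qed.

Lemma admissibleD k (f g : ('I_k -> M) -> C) :
  admissible f -> admissible g -> admissible (fun x => f x + g x).
Proof.
move=> [fs f0] [gs g0]; split => [|x sx]; first exact: borel_simpleD.
by rewrite f0 // g0 // addr0.
Qed.

Lemma admissibleZ k c (f : ('I_k -> M) -> C) :
  admissible f -> admissible (fun x => c * f x).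
Proof.
move=> [fs f0]; split => [|x sx]; first exact: borel_simpleZ.
by rewrite f0 // mulr0.
Qed.

End Transverse.

Section EvalMatrix.
Variables (F : comPzRingType) (M : Type).

Definition evalmx k (f : 'I_k -> M -> F) (x : 'I_k -> M) : 'M[F]_k :=
  \matrix_(i, j) f i (x j).

Definition with_row k (f : 'I_k -> M -> F) (i0 : 'I_k) (h : M -> F) : 'I_k -> M -> F :=
  fun i => if i == i0 then h else f i.

Lemma det_with_rowD k (f : 'I_k -> M -> F) i0 g h x :
  \det (evalmx (with_row f i0 (fun y => g y + h y)) x) =
  \det (evalmx (with_row f i0 g) x) + \det (evalmx (with_row f i0 h) x).
Proof.
rewrite (determinant_multilinear (B := evalmx (with_row f i0 g) x)
  (C := evalmx (with_row f i0 h) x) (i0 := i0) (b := 1) (c := 1)) ?mul1r //.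
- by apply/rowP => j; rewrite !mxE /with_row eqxx !mul1r.
- by apply/matrixP => i j; rewrite !mxE /with_row eq_sym (negbTE (neq_lift _ _)).
- by apply/matrixP => i j; rewrite !mxE /with_row eq_sym (negbTE (neq_lift _ _)).
Qed.

Lemma det_evalmx_dup k (f : 'I_k -> M -> F) i1 i2 x :
  i1 != i2 -> (forall j, f i1 (x j) = f i2 (x j)) -> \det (evalmx f x) = 0.
Proof. by move=> i12 fx; apply: (determinant_alternate i12) => j; rewrite !mxE. Qed.

Lemma det_evalmx_row0 k (f : 'I_k -> M -> F) i0 x :
  (forall j, f i0 (x j) = 0) -> \det (evalmx f x) = 0.
Proof.
by move=> fx; rewrite (expand_det_row _ i0) big1 // => j _; rewrite mxE fx mul0r.
Qed.

Lemma det_sub_lastrow n (A : 'M[F]_n.+1) (c : 'I_n.+1 -> F) :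
  c ord_max = 0 -> \det (\matrix_(i, j) (A i j - c i * A ord_max j)) = \det A.
Proof.
move=> c0; pose U : 'M[F]_n.+1 := \matrix_(i, j) ((i == j)%:R - c i * (j == ord_max)%:R).
have -> : \matrix_(i, j) (A i j - c i * A ord_max j) = U *m A.
  apply/matrixP => i j; rewrite !mxE.
  under eq_bigr do rewrite mxE mulrBl.
  rewrite big_split /= sumrN (bigD1 i) //= eqxx mul1r big1 ?addr0 => [|k ki]; last first.
    by rewrite eq_sym (negbTE ki) mul0r.
  rewrite (bigD1 ord_max) //= eqxx mulr1 big1 ?addr0 // => k kmax.
  by rewrite (negbTE kmax) mulr0 mul0r.
rewrite det_mulmx -det_tr det_trig ?mul1r.
  rewrite big1 ?mul1r // => i _; rewrite /U !mxE eqxx.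
  by case: eqP => [->|]; rewrite ?c0 ?mul0r ?mulr0 subr0.
apply/is_trig_mxP => i j ij; rewrite /U !mxE.
have /negbTE -> : j != i by rewrite -val_eqE /= gtn_eqF.
have /negbTE -> : i != ord_max by rewrite -val_eqE /= ltn_eqF // (leq_trans ij (leq_ord j)).
by rewrite mulr0 subr0.
Qed.

End EvalMatrix.

Section Indicators.
Variables (R : realType) (M : Type).
Local Notation C := R[i].

Lemma indicE1 (A : set M) y : A y -> indic A y = 1 :> C.
Proof. by move=> Ay; rewrite /indic asboolT. Qed.

Lemma indicE0 (A : set M) y : ~ A y -> indic A y = 0 :> C.
Proof. by move=> nAy; rewrite /indic asboolF. Qed.

Lemma indicI (A B : set M) y : indic (A `&` B) y = indic A y * indic B y :> C.
Proof.
rewrite /indic [X in if X then _ else _]asbool_and.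
by case: `[< A y >]; case: `[< B y >]; rewrite ?mul1r ?mul0r.
Qed.

Lemma indicC (A : set M) y : indic (~` A) y = 1 - indic A y :> C.
Proof.
rewrite /indic [X in if X then _ else _]asbool_neg.
by case: `[< A y >]; rewrite ?subrr ?subr0.
Qed.

(* For [Y := X \o sigma], [tailcap Y i] is C_i = X_{σ_{i+1}} ⋯ X_{σ_n}. *)
Definition tailcap n (Y : 'I_n -> set M) (i : nat) : set M :=
  \bigcap_(j in [set j : 'I_n | (i <= j)%N]) Y j.

Lemma tailcapS n (Y : 'I_n -> set M) (k : 'I_n) :
  tailcap Y k = Y k `&` tailcap Y k.+1.
Proof.
apply/seteqP; split => y.
  by move=> Ck; split => [|j kj]; apply: Ck => //=; rewrite ltnW.
move=> [Yk Ck1] j /=; rewrite leq_eqVlt => /orP[/eqP kj|]; last exact: Ck1.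
by rewrite (_ : j = k) //; apply: val_inj.
Qed.

Lemma tailcap_ge n (Y : 'I_n -> set M) i : (n <= i)%N -> tailcap Y i = setT.
Proof.
move=> ni; apply/seteqP; split => // y _ j /= ij.
by move: (ltn_ord j); rewrite ltnNge (leq_trans ni ij).
Qed.

Lemma tailcap_perm n (Y : 'I_n -> set M) (s : 'S_n) i :
  (forall j, (i <= s j) = (i <= j))%N -> tailcap (fun j => Y (s j)) i = tailcap Y i.
Proof.
move=> si; apply/seteqP; split => y Cy j /= ij; last by apply: Cy; rewrite /= si.
by rewrite -(permKV s j); apply: Cy; rewrite /= -si permKV.
Qed.

Lemma borel_tailcap n (d : M -> M -> R) (Y : 'I_n -> set M) i :
  (forall j, mborel d (Y j)) -> mborel d (tailcap Y i).
Proof. by move=> mY; apply: borel_fin_bigcap => j _; exact: mY. Qed.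

Lemma tailcap_indic_sum n (X : 'I_n -> set M) (s : 'S_n) (i : 'I_n.+1) y :
  indic (tailcap (fun j => X (s j)) i) y =
  \sum_(k < n.+1 | (k <= i)%N) indic (Aset X s k) y :> C.
Proof.
case: i => m; elim: m => [|m IH] lt_m /=.
  rewrite (big_pred1 ord0) => [|k]; last by rewrite leqn0.
  rewrite /Aset unlift_none; congr indic.
  by apply/seteqP; split => y' Cy j _; exact: Cy.
pose k : 'I_n := Ordinal (lt_m : (m < n)%N).
rewrite (bigD1 (lift ord0 k)) //= (eq_bigl (fun j : 'I_n.+1 => (j <= m)%N)) => [|j].
  rewrite -(IH (ltnW lt_m)) /Aset liftK [tailcap _ m](tailcapS _ k).
  by rewrite indicI indicC [indic (_ `&` _) y]indicI; ring.
by rewrite -val_eqE /= /bump leq0n add1n -[(j <= m)%N]ltnS; case: ltngtP.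
Qed.

End Indicators.

Section Cochains.
Variables (R : realType) (M : Type).
Local Notation C := R[i].

Lemma wedgeE k (f : 'I_k.+1 -> M -> C) x : wedge f x = \det (evalmx f x).
Proof.
rewrite -det_tr /wedge /determinant; apply: eq_bigr => s _.
by congr (_ * _); apply: eq_bigr => j _; rewrite !mxE.
Qed.

Lemma wedge_Aset_tailcap n (X : 'I_n -> set M) (s : 'S_n) x :
  wedge (fun i => indic (Aset X s i)) x =
  \det (evalmx (fun i : 'I_n.+1 => indic (tailcap (fun j => X (s j)) i)) x) :> C.
Proof.
(* C_i is the disjoint union of A_0, ..., A_i. *)
pose L : 'M[C]_n.+1 := \matrix_(i, k) (k <= i)%N%:R.
rewrite wedgeE [RHS](_ : _ = \det (L *m evalmx (fun i => indic (Aset X s i)) x)).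
  rewrite det_mulmx [\det L]det_trig; last first.
    by apply/is_trig_mxP => i k ik; rewrite mxE leqNgt ik.
  by rewrite big1 ?mul1r // => i _; rewrite mxE leqnn.
congr (\det _); apply/matrixP => i j; rewrite !mxE tailcap_indic_sum big_mkcond /=.
by apply: eq_bigr => k _; rewrite !mxE; case: leqP; rewrite ?mul1r ?mul0r.
Qed.

Lemma coboundD k (f g : ('I_k.+1 -> M) -> C) x :
  cobound (fun z => f z + g z) x = cobound f x + cobound g x.
Proof. by rewrite /cobound -big_split; apply: eq_bigr => i _; rewrite mulrDr. Qed.

Lemma coboundZ k c (f : ('I_k.+1 -> M) -> C) x :
  cobound (fun z => c * f z) x = c * cobound f x.
Proof. by rewrite /cobound mulr_sumr; apply: eq_bigr => i _; rewrite mulrCA. Qed.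

Lemma det_evalmx_cobound k (f : 'I_k.+2 -> M -> C) (c : 'I_k.+2 -> C) x :
  (forall y, f ord_max y = 1) -> c ord_max = 0 ->
  \det (evalmx f x) = (-1) ^+ k.+1 * cobound (fun z =>
    \det (evalmx (fun i y => f (lift ord_max i) y - c (lift ord_max i)) z)) x.
Proof.
move=> f1 c0; rewrite -(det_sub_lastrow _ c0) (expand_det_row _ ord_max).
rewrite /cobound mulr_sumr; apply: eq_bigr => j _.
rewrite !mxE f1 c0 mul0r subr0 mul1r /cofactor exprD -mulrA.
congr (_ * (_ * \det _)).
by apply/matrixP => i j'; rewrite !mxE f1 mulr1.
Qed.

End Cochains.

Section AdjacentSwap.
Variables (R : realType) (M : Type) (n : nat) (Y : 'I_n.+1 -> set M) (a b : 'I_n.+1).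
Hypothesis ab : val b = (val a).+1.
Local Notation C := R[i].
Local Notation Y' := (fun j => Y (tperm a b j)).

Definition swap_gap : set M := ~` Y a `&` ~` Y b `&` tailcap Y b.+1.

(* Subtracting the constant last row 1_{C_{n+1}} from the rows beyond b turns
   1_{C_i} into -1_{~C_i}: then a tuple inside or outside a single [Y k] meets
   a zero row or two equal rows. *)
Definition swap_rows (i : 'I_n.+1) (y : M) : C :=
  (if i == b then indic swap_gap y else indic (tailcap Y i) y) - (b < i)%N%:R.

Definition swap_cochain (z : 'I_n.+1 -> M) : C :=
  - (-1) ^+ n.+1 * \det (evalmx swap_rows z).

Lemma tailcap_swap (i : nat) : i != b -> tailcap Y' i = tailcap Y i.
Proof.
move=> ib; apply: tailcap_perm => j.
have iab : (i <= b)%N = (i <= a)%N by rewrite leq_eqVlt (negbTE ib) ab ltnS.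
by case: tpermP => [->|->|]; rewrite ?iab.
Qed.

Lemma indic_swap_split y :
  indic (tailcap Y b) y + indic (tailcap Y' b) y + indic swap_gap y =
  indic (tailcap Y a) y + indic (tailcap Y b.+1) y :> C.
Proof.
have Cb1 : tailcap Y' b.+1 = tailcap Y b.+1 by apply: tailcap_swap; rewrite gtn_eqF.
rewrite [tailcap Y a](tailcapS _ a) -ab !(tailcapS _ b).
by rewrite Cb1 tpermR /swap_gap !indicI !indicC; ring.
Qed.

Lemma det_tailcap_swap x :
  \det (evalmx (fun i : 'I_n.+2 => indic (tailcap Y i)) x) +
  \det (evalmx (fun i : 'I_n.+2 => indic (tailcap Y' i)) x) = cobound swap_cochain x.
Proof.
pose F (i : 'I_n.+2) : M -> C := indic (tailcap Y i).
pose ib : 'I_n.+2 := widen_ord (leqnSn _) b.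
pose rowb h := \det (evalmx (with_row F ib h) x).
have EY : \det (evalmx F x) = rowb (F ib).
  by congr (\det _); apply/matrixP => i j; rewrite !mxE /with_row; case: eqP => // ->.
have EY' : \det (evalmx (fun i => indic (tailcap Y' i)) x) = rowb (indic (tailcap Y' b)).
  congr (\det _); apply/matrixP => i j; rewrite !mxE /with_row.
  by case: eqP => [-> //|/eqP iib]; rewrite tailcap_swap //; rewrite -val_eqE in iib.
have dup i : i != ib -> \det (evalmx (with_row F ib (F i)) x) = 0.
  by move=> iib; apply: (det_evalmx_dup iib) => j; rewrite /with_row eqxx (negbTE iib).
have Erows : rowb (F ib) + rowb (indic (tailcap Y' b)) + rowb (indic swap_gap) = 0.
  pose ia : 'I_n.+2 := widen_ord (leqnSn _) a.
  pose ib1 : 'I_n.+2 := Ordinal (ltn_ord b : (b.+1 < n.+2)%N).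
  (* The rows C_a and C_{b+1} already occur, so only the row D survives. *)
  have split_row : (fun y => F ib y + indic (tailcap Y' b) y + indic swap_gap y) =
      (fun y => F ia y + F ib1 y) by apply/funext => y; exact: indic_swap_split.
  rewrite -!det_with_rowD split_row det_with_rowD !dup ?addr0 // -val_eqE /= ?ab.
    by rewrite eqSS neq_ltn ltnSn orbT.
  by rewrite neq_ltn ltnSn.
have Egap : rowb (indic swap_gap) =
    (-1) ^+ n.+1 * cobound (fun z => \det (evalmx swap_rows z)) x.
  rewrite /rowb (det_evalmx_cobound (c := fun i : 'I_n.+2 => ((b < i) && (i < n.+1))%N%:R)).
  - congr (_ * cobound _ _); apply/funext => z; congr (\det _).
    apply/matrixP => i j; rewrite !mxE /with_row /swap_rows /F.
    have li : val (lift ord_max i) = val i := lift_max i.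
    have -> : (lift ord_max i == ib) = (i == b) by rewrite -!val_eqE li.
    by rewrite lift_max ltn_ord andbT; case: eqP.
  - move=> y; rewrite /with_row.
    have /negbTE -> : ord_max != ib by rewrite -val_eqE /= gtn_eqF.
    by rewrite /F tailcap_ge // indicE1.
  - by rewrite /= ltnn andbF.
rewrite EY EY' /swap_cochain coboundZ mulNr -Egap.
by apply/eqP; rewrite -addr_eq0 Erows.
Qed.

Lemma swap_cochain_separated z : separated Y z -> swap_cochain z = 0.
Proof.
move=> sep; suff : \det (evalmx swap_rows z) = 0.
  by rewrite /swap_cochain => ->; rewrite mulr0.
case: sep => i [inY|outY]; last first.
  apply: (det_evalmx_row0 (i0 := ord0)) => j; rewrite /swap_rows.
  have /negbTE -> : ord0 != b by rewrite -val_eqE /= ab.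
  by rewrite ltn0 subr0 indicE0 // => C0; apply: (outY j); exact: C0 i (leq0n i).
have [/orP iab | /norP[ia ib]] := boolP ((i == a) || (i == b)).
  apply: (det_evalmx_row0 (i0 := b)) => j.
  rewrite /swap_rows eqxx ltnn subr0 indicE0 // => -[[nYa nYb] _].
  by case: iab => /eqP ei; [apply: nYa | apply: nYb]; rewrite -ei.
have Cin k : indic (tailcap Y i) (z k) = indic (tailcap Y i.+1) (z k) :> C.
  by rewrite (tailcapS _ i) indicI indicE1 ?mul1r.
have [ilt | ige] := ltnP i n; last first.
  apply: (det_evalmx_row0 (i0 := i)) => j.
  have bi : (b < i)%N by rewrite ltn_neqAle eq_sym ib /= (leq_trans (leq_ord b) ige).
  by rewrite /swap_rows (negbTE ib) bi Cin tailcap_ge // indicE1 ?subrr.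
pose i1 : 'I_n.+1 := Ordinal (ilt : (i.+1 < n.+1)%N).
apply: (det_evalmx_dup (i1 := i) (i2 := i1)) => [|j].
  by rewrite -val_eqE /= neq_ltn ltnSn.
rewrite /swap_rows (negbTE ib).
have /negbTE -> : i1 != b by move: ia; rewrite -!val_eqE /= ab eqSS.
have bi1 : (b < i1)%N = (b < i)%N.
  by move: ib; rewrite -val_eqE /= ltnS leq_eqVlt eq_sym => /negbTE ->.
by rewrite Cin bi1.
Qed.

Lemma swap_cochain_borel_simple (d : M -> M -> R) :
  (forall j, mborel d (Y j)) -> borel_simple (dmax d) swap_cochain.
Proof.
move=> mY; pose B i := if i == b then swap_gap else tailcap Y i.
have mB i : mborel d (B i).
  rewrite /B; case: eqP => _; last exact: borel_tailcap.
  by apply: borelI; [apply: borelI; exact: borelC | exact: borel_tailcap].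
exists ('I_n.+1 * 'I_n.+1)%type, (fun l => [set z : 'I_n.+1 -> M | B l.1 (z l.2)]).
exists (fun v => - (-1) ^+ n.+1 *
  \det (\matrix_(i, j) ((if v (i, j) then 1 else 0) - (b < i)%N%:R))).
split => [l|z]; first exact: borel_coord.
rewrite /swap_cochain; congr (_ * \det _); apply/matrixP => i j.
by rewrite !mxE /swap_rows /B; case: eqP.
Qed.

End AdjacentSwap.

Lemma adjacent_tperm_ind n (P : 'S_n -> Prop) :
  P 1%g -> (forall s (a b : 'I_n), val b = (val a).+1 -> P s -> P (tperm a b * s)%g) ->
  forall s, P s.
Proof.
move=> P1 Padj.
pose Q (t : 'S_n) := forall s, P s -> P (t * s)%g.
have QM u v : Q u -> Q v -> Q (u * v)%g by move=> Qu Qv s /Qv /Qu; rewrite mulgA.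
have Q1 : Q 1%g by move=> s; rewrite mul1g.
have Qdist k : forall a b : 'I_n, val b = (val a + k.+1)%N -> Q (tperm a b).
  elim: k => [|k IH] a b ab; first by move=> s; apply: Padj; rewrite ab addn1.
  have lt_c : (a + k.+1 < n)%N.
    by apply: leq_trans (ltn_ord b); rewrite ltnS ab leq_add2l.
  pose c : 'I_n := Ordinal lt_c.
  have -> : tperm a b = (tperm c b * (tperm a c * tperm c b))%g.
    rewrite -{1}[tperm c b]tpermV -conjgE tpermJ tpermL tpermD //.
      by rewrite -val_eqE /= -{2}[val a]addn0 eqn_add2l.
    by rewrite -val_eqE ab -{2}[val a]addn0 eqn_add2l.
  have Qcb : Q (tperm c b) by move=> s; apply: Padj; rewrite ab /= addnS.
  by apply: (QM) => //; apply: (QM) => //; exact: IH.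
have Qtperm a b : Q (tperm a b).
  wlog ab : a b / (val a <= val b)%N.
    by move=> H; case: (leqP a b) => [/H//|/ltnW/H]; rewrite tpermC.
  move: ab; rewrite leq_eqVlt => /orP[/eqP/val_inj->|ab]; first by rewrite tperm1.
  by apply: (Qdist (b - a.+1)%N); rewrite -addSnnS subnKC.
have Qall s : Q s.
  have [ts -> _] := prod_tpermP s.
  elim: ts => [|t ts IH]; first by rewrite big_nil.
  by rewrite big_cons; apply: QM.
by move=> s; rewrite -[s]mulg1; apply: Qall.
Qed.

Section WedgeSign.
Variables (R : realType) (M : Type) (d : M -> M -> R) (n : nat).
Variable X : 'I_n.+1 -> set M.
Hypothesis mX : forall i, mborel d (X i).
Local Notation C := R[i].

Definition wedgeA (s : 'S_n.+1) (x : 'I_n.+2 -> M) : C :=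
  wedge (fun i => indic (Aset X s i)) x.

Definition admissible_coboundary (f : ('I_n.+2 -> M) -> C) :=
  exists2 eta, admissible d X eta & f = cobound eta.

Lemma admissible_coboundaryB f g : admissible_coboundary f ->
  admissible_coboundary g -> admissible_coboundary (fun x => f x - g x).
Proof.
move=> [eta adm ->] [eta' adm' ->]; exists (fun z => eta z + (-1) * eta' z).
  by apply: admissibleD => //; exact: admissibleZ.
by apply/funext => x; rewrite coboundD coboundZ mulN1r.
Qed.

Lemma wedgeA_swap s (a b : 'I_n.+1) : val b = (val a).+1 ->
  admissible_coboundary (fun x => wedgeA (tperm a b * s) x + wedgeA s x).
Proof.
move=> ab; pose Y j := X (s j).
exists (swap_cochain R Y a b).
  split => [|z [i sep]]; first by apply: swap_cochain_borel_simple => j; exact: mX.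
  by apply: (swap_cochain_separated R ab); exists (s^-1 i)%g; rewrite /Y permKV.
apply/funext => x; rewrite /wedgeA !wedge_Aset_tailcap addrC.
rewrite -(det_tailcap_swap R Y ab).
rewrite (_ : (fun j => X ((tperm a b * s)%g j)) = (fun j => Y (tperm a b j))) //.
by apply/funext => j; rewrite permM.
Qed.

Lemma wedgeA_sign s :
  admissible_coboundary (fun x => wedgeA s x - (-1) ^+ odd_perm s * wedgeA 1 x).
Proof.
elim/adjacent_tperm_ind: s => [|s a b ab IH].
  exists (fun _ => 0); first exact: admissible0.
  apply/funext => x; rewrite odd_perm1 mul1r subrr /cobound big1 // => i _.
  by rewrite mulr0.
have ba : (a != b) by rewrite -val_eqE ab neq_ltn ltnSn.
rewrite (_ : (fun x => _) = fun x => (wedgeA (tperm a b * s) x + wedgeA s x) -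
    (wedgeA s x - (-1) ^+ odd_perm s * wedgeA 1 x)).
  exact: admissible_coboundaryB (wedgeA_swap s ab) IH.
apply/funext => x; rewrite odd_mul_tperm ba signrN.
by move: (wedgeA _ x) (wedgeA s x) (wedgeA 1 x) ((-1) ^+ odd_perm s) => A B W c; ring.
Qed.

End WedgeSign.

Unset Implicit Arguments.

Theorem proposition5p7 (R : realType) (M : Type) (d : M -> M -> R) (n : nat)
  (X : 'I_n -> set M) (sigma : 'S_n) :
  proper_metric d ->
  coarsely_transverse d X ->
  is_coboundary d
    (fun x => wedge (fun i => indic (Aset X sigma i)) x
              - (-1) ^+ (odd_perm sigma) * wedge (fun i => indic (Aset X 1%g i)) x).
Proof.
move=> [hd _]; case: n X sigma => [|n] X sigma htr /=.
  have -> : sigma = 1%g by apply/permP => -[].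
  by apply/funext => x; rewrite odd_perm1 mul1r subrr.
have [theta adm ->] := wedgeA_sign htr.1 sigma.
by exists theta => //; apply: admissible_CX htr adm.
Qed.
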